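(* Let $\mathsf{K}$ be an idempotent commutative semiring. Every rational series $\mathsf{S}\in\mathsf{K}[[X]]$ can be written as $$\mathsf{S}=\bigoplus_{1\leq i\leq r}\mathsf{P}_i\,(\mathsf{q}_iX^c)^*,$$ where $r\ge 0$, $\mathsf{P}_1,\dots,\mathsf{P}_r\in\mathsf{K}[X]$ are polynomials, $\mathsf{q}_1,\dots,\mathsf{q}_r\in\mathsf{K}$, and $c$ is a positive integer.
   Context: $\mathsf{K}[[X]]$ is the semiring of formal power series over $\mathsf{K}$ with coefficientwise sum $\oplus$ and Cauchy product; for a series $U$ with zero constant coefficient, $U^*=\bigoplus_{k\ge0}U^k$. A series is rational if it belongs to the smallest subset of $\mathsf{K}[[X]]$ containing $\mathsf{K}[X]$ and closed under sum, product and star (of series with zero constant coefficient). Idempotent: $u\oplus u=u$; commutative: $uv=vu$. *)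

From HB Require Import structures.
From mathcomp Require Import all_boot all_order all_algebra.
Set Implicit Arguments. Unset Strict Implicit. Unset Printing Implicit Defensive.
Import GRing.Theory.
Local Open Scope ring_scope.

Section Series.
Variable K : comPzSemiRingType.

Definition series := nat -> K.

Definition idempotent_sr : Prop := forall u : K, u + u = u.

Definition szero : series := fun _ => 0.
Definition sone : series := fun n => if n == 0%N then 1 else 0.
Definition sconst (a : K) : series := fun n => if n == 0%N then a else 0.
Definition smono (a : K) (c : nat) : series := fun n => if n == c then a else 0.
Definition sadd (S T : series) : series := fun n => S n + T n.
Definition smul (S T : series) : series :=
  fun n => \sum_(i < n.+1) S i * T (n - i)%N.
Fixpoint spow (U : series) (k : nat) : series :=
  if k is k'.+1 then smul U (spow U k') else sone.
(* U^* = (+)_{k>=0} U^k ; when U 0 = 0, the coefficient of X^n in U^k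
   vanishes for k > n, so the n-th coefficient of the (coefficientwise
   locally finite) infinite sum is the finite sum over k <= n.
   This formula is only used for U with zero constant coefficient. *)
Definition sstar (U : series) : series :=
  fun n => \sum_(k < n.+1) spow U k n.

Definition is_poly (S : series) : Prop :=
  exists N : nat, forall n, (N <= n)%N -> S n = 0.

Inductive rational : series -> Prop :=
| rat_poly S : is_poly S -> rational S
| rat_add S T : rational S -> rational T -> rational (sadd S T)
| rat_mul S T : rational S -> rational T -> rational (smul S T)
| rat_star U : rational U -> U 0%N = 0 -> rational (sstar U).

Definition sbig (r : nat) (F : nat -> series) : series :=
  fun n => \sum_(i < r) F i n.

End Series.

(** Over an idempotent commutative semiring, series without constant term
    satisfy [(U + V)^* = U^* V^*] and [U^* U^* = U^*], hence
    [(M B^* )^* = 1 + M M^* B^*].  Call [S] normalizable when it is a finite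
    sum of terms [a X^e (q X^c)^*] with one common period [c > 0].  Since
    [(q X^c)^* = (+)_(j < m) q^j X^(jc) (q^m X^(mc))^*], any period can be
    multiplied by [m > 0], so two normal forms can be given a common period;
    then sums are immediate and products follow from
    [(q X^c)^* (q' X^c)^* = ((q + q') X^c)^*].  By idempotency, a sum without
    constant term has summands without constant term, so its star is the
    product of the stars of its terms, each normalizable by the identity for
    [(M B^* )^*]. *)

From HB Require Import structures.
From mathcomp Require Import all_boot all_order all_algebra boolp.

Set Implicit Arguments. Unset Strict Implicit. Unset Printing Implicit Defensive.
Import GRing.Theory.
Local Open Scope ring_scope.

Section SeriesSemiring.
Variable K : comPzSemiRingType.
Implicit Types (S T U : series K) (a b : K).

HB.instance Definition _ := Choice.copy (series K) (nat -> K).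

Lemma saddA : associative (@sadd K).
Proof. by move=> S T U; apply/funext => n; rewrite /sadd addrA. Qed.

Lemma saddC : commutative (@sadd K).
Proof. by move=> S T; apply/funext => n; rewrite /sadd addrC. Qed.

Lemma add0s : left_id (@szero K) (@sadd K).
Proof. by move=> S; apply/funext => n; rewrite /sadd /szero add0r. Qed.

HB.instance Definition _ := GRing.isNmodule.Build (series K) saddA saddC add0s.

Lemma smul_rev S T n : smul S T n = \sum_(j < n.+1) S (n - j)%N * T j.
Proof.
rewrite /smul (reindex_inj rev_ord_inj) /=.
by apply: eq_bigr => j _; rewrite (sub_ordK j).
Qed.

Lemma smulC : commutative (@smul K).
Proof.
move=> S T; apply/funext => n.
by rewrite smul_rev /smul; apply: eq_bigr => j _; rewrite mulrC.
Qed.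

Lemma smulA : associative (@smul K).
Proof.
move=> S T U; apply/funext => n; rewrite [LHS]/smul [RHS]smul_rev.
pose c i j := S i * (T (n - i - j)%N * U j).
transitivity (\sum_(i < n.+1) \sum_(j < n.+1 | (j <= n - i)%N) c i j).
  apply: eq_bigr => /= i _; rewrite smul_rev big_distrr /=.
  by rewrite (big_ord_narrow_leq (leq_subr _ _)).
rewrite (exchange_big_dep predT) //=; apply: eq_bigr => j _.
transitivity (\sum_(i < n.+1 | (i <= n - j)%N) c i j).
  apply: eq_bigl => i; rewrite -ltnS -(ltnS i) -!subSn ?leq_ord //.
  by rewrite -subn_gt0 -(subn_gt0 i) -!subnDA addnC.
rewrite (big_ord_narrow_leq (leq_subr _ _)) /smul big_distrl /=.
by apply: eq_bigr => i _; rewrite /c -!subnDA addnC mulrA.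
Qed.

Lemma mul1s : left_id (@sone K) (@smul K).
Proof.
move=> S; apply/funext => n.
rewrite /smul big_ord_recl subn0 /sone /= mul1r big1 ?addr0 // => i _.
by rewrite mul0r.
Qed.

Lemma smulDl : left_distributive (@smul K) (@sadd K).
Proof.
move=> S T U; apply/funext => n.
by rewrite /smul /sadd -big_split /=; apply: eq_bigr => i _; rewrite mulrDl.
Qed.

Lemma mul0s : left_zero (@szero K) (@smul K).
Proof.
move=> S; apply/funext => n.
by rewrite /smul /szero big1 // => i _; rewrite mul0r.
Qed.

HB.instance Definition _ := GRing.Nmodule_isComPzSemiRing.Build (series K)
  smulA smulC mul1s smulDl mul0s.

Lemma coefD S T n : (S + T) n = S n + T n.
Proof. by []. Qed.

Lemma coefM S T n : (S * T) n = \sum_(i < n.+1) S i * T (n - i)%N.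
Proof. by []. Qed.

Lemma coefM0 S T : (S * T) 0%N = S 0%N * T 0%N.
Proof. by rewrite coefM big_ord_recl big_ord0 addr0. Qed.

Lemma coef_sum (I : Type) (r : seq I) (P : pred I) (F : I -> series K) n :
  (\sum_(i <- r | P i) F i) n = \sum_(i <- r | P i) F i n.
Proof.
elim: r => [|i r IH]; first by rewrite !big_nil.
by rewrite !big_cons; case: (P i); rewrite ?coefD IH.
Qed.

Lemma spowE U k : spow U k = U ^+ k.
Proof. by elim: k => // k IH; rewrite exprS /= IH. Qed.

Lemma sstarE U n : sstar U n = \sum_(k < n.+1) (U ^+ k) n.
Proof. by apply: eq_bigr => k _; rewrite spowE. Qed.

Lemma sstar_coef0 U : sstar U 0%N = 1.
Proof. by rewrite sstarE big_ord_recl big_ord0 addr0 expr0. Qed.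

Lemma sstar0 : sstar (0 : series K) = 1.
Proof.
apply/funext => n; rewrite sstarE big_ord_recl expr0 big1 ?addr0 // => i _.
by rewrite expr0n.
Qed.

Definition vanish_lt v S := forall n, (n < v)%N -> S n = 0.

Lemma vanish_ltW v w S : (w <= v)%N -> vanish_lt v S -> vanish_lt w S.
Proof. by move=> le_wv hS n lt_nw; apply/hS/(leq_trans lt_nw). Qed.

Lemma vanish_ltM v w S T :
  vanish_lt v S -> vanish_lt w T -> vanish_lt (v + w) (S * T).
Proof.
move=> hS hT n lt_n; rewrite coefM big1 // => i _.
have [lt_iv|le_vi] := ltnP i v; first by rewrite hS ?mul0r.
rewrite hT ?mulr0 // ltn_subLR; last by rewrite -ltnS.
by apply: leq_trans lt_n _; rewrite leq_add2r.
Qed.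

Lemma vanish_ltX U k : U 0%N = 0 -> vanish_lt k (U ^+ k).
Proof.
move=> U0; elim: k => [|k IH]; first by [].
rewrite exprS -add1n; apply: vanish_ltM IH.
by case=> // n; rewrite ltnS.
Qed.

Lemma vanish_lt_sum (I : Type) (r : seq I) (P : pred I) (F : I -> series K) v :
  (forall i, P i -> vanish_lt v (F i)) -> vanish_lt v (\sum_(i <- r | P i) F i).
Proof. by move=> hF n lt_nv; rewrite coef_sum big1 // => i /hF ->. Qed.

Definition agree_lt N S T := forall n, (n < N)%N -> S n = T n.

Lemma agree_lt_sym N S T : agree_lt N S T -> agree_lt N T S.
Proof. by move=> h n lt_nN; rewrite h. Qed.

Lemma agree_lt_trans N S T U : agree_lt N S T -> agree_lt N T U -> agree_lt N S U.
Proof. by move=> h1 h2 n lt_nN; rewrite h1 ?h2. Qed.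

Lemma agree_ltW M N S T : (M <= N)%N -> agree_lt N S T -> agree_lt M S T.
Proof. by move=> le_MN h n lt_nM; apply/h/(leq_trans lt_nM). Qed.

Lemma agree_ltD N S T S' T' :
  agree_lt N S S' -> agree_lt N T T' -> agree_lt N (S + T) (S' + T').
Proof. by move=> h1 h2 n lt_nN; rewrite !coefD h1 ?h2. Qed.

Lemma agree_ltM N S T S' T' :
  agree_lt N S S' -> agree_lt N T T' -> agree_lt N (S * T) (S' * T').
Proof.
move=> h1 h2 n lt_nN; rewrite !coefM; apply: eq_bigr => i _.
rewrite h1 ?h2 //; apply: leq_ltn_trans lt_nN; first exact: leq_subr.
by rewrite -ltnS.
Qed.

Lemma agree_lt_addr N S T : vanish_lt N T -> agree_lt N (S + T) S.
Proof. by move=> hT n lt_nN; rewrite coefD hT ?addr0. Qed.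

Lemma agree_lt_eq S T : (forall N, agree_lt N S T) -> S = T.
Proof. by move=> h; apply/funext => n; apply: (h n.+1). Qed.

Lemma agree_lt_sstar N U :
  U 0%N = 0 -> agree_lt N (sstar U) (\sum_(k < N) U ^+ k).
Proof.
move=> U0 n lt_nN; rewrite sstarE coef_sum.
rewrite (big_ord_widen N (fun k => (U ^+ k) n) lt_nN).
rewrite [RHS](bigID (fun k : 'I_N => (k < n.+1)%N)) /=.
rewrite [X in _ = _ + X]big1 ?addr0 // => k.
by rewrite -leqNgt => /(vanish_ltX (k := k) U0).
Qed.

Lemma coef_smonoM a e S n :
  (smono a e * S) n = if (e <= n)%N then a * S (n - e)%N else 0.
Proof.
rewrite coefM; case: leqP => [le_en|lt_ne].
  rewrite (bigD1 (Ordinal (le_en : e < n.+1)%N)) //= /smono eqxx big1 ?addr0 //.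
  by move=> i ne_ie; rewrite ifN ?mul0r // -(inj_eq val_inj).
rewrite big1 // => i _; rewrite /smono ifN ?mul0r //.
by rewrite neq_ltn (leq_ltn_trans _ lt_ne) // -ltnS.
Qed.

Lemma smonoM a e b f : smono a e * smono b f = smono (a * b) (e + f) :> series K.
Proof.
apply/funext => n; rewrite coef_smonoM /smono.
case: leqP => [le_en|lt_ne].
  by rewrite -(eqn_add2r e) subnK // [(f + e)%N]addnC; case: eqP; rewrite ?mulr0.
by case: eqP => // n_ef; move: lt_ne; rewrite n_ef ltnNge leq_addr.
Qed.

Lemma smonoD a b e : smono a e + smono b e = smono (a + b) e :> series K.
Proof. by apply/funext => n; rewrite coefD /smono; case: eqP; rewrite ?addr0. Qed.

Lemma smono0 e : smono 0 e = 0 :> series K.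
Proof. by apply/funext => n; rewrite /smono; case: eqP. Qed.

Lemma smono10 : smono 1 0 = 1 :> series K.
Proof. by []. Qed.

Lemma smonoX a e k : smono a e ^+ k = smono (a ^+ k) (k * e) :> series K.
Proof.
elim: k => [|k IH]; first by rewrite expr0 mul0n.
by rewrite exprS IH smonoM exprS mulSn.
Qed.

Lemma smono_coef0 a e : (0 < e)%N -> smono a e 0%N = 0 :> K.
Proof. by rewrite /smono; case: e. Qed.

End SeriesSemiring.

Section IdempotentSemiring.
Variable R : comPzSemiRingType.
Hypothesis idR : idempotent_sr R.
Implicit Types x y z : R.

Definition ile x y := x + y = y.

Lemma ile_refl x : ile x x.
Proof. exact: idR. Qed.

Lemma ile_trans y x z : ile x y -> ile y z -> ile x z.
Proof. by rewrite /ile => h1 h2; rewrite -h2 addrA h1. Qed.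

Lemma ile_anti x y : ile x y -> ile y x -> x = y.
Proof. by rewrite /ile => h1 h2; rewrite -h1 -[in LHS]h2 addrC. Qed.

Lemma ile_addl x y : ile x (x + y).
Proof. by rewrite /ile addrA idR. Qed.

Lemma ile_sum (I : Type) (r : seq I) (P : pred I) (F : I -> R) y :
  (forall i, P i -> ile (F i) y) -> ile (\sum_(i <- r | P i) F i) y.
Proof.
move=> hF; elim: r => [|i r IH]; first by rewrite big_nil /ile add0r.
rewrite big_cons; case: ifP => // Pi.
by rewrite /ile -addrA IH hF.
Qed.

Lemma ile_sumr (I : eqType) (r : seq I) (P : pred I) (F : I -> R) x i :
  i \in r -> P i -> ile x (F i) -> ile x (\sum_(j <- r | P j) F j).
Proof.
by move=> ri Pi; rewrite (big_rem _ ri) Pi => /ile_trans; apply; apply: ile_addl.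
Qed.

Lemma ile_sum_ord N (i : 'I_N) (P : pred 'I_N) (F : 'I_N -> R) x :
  P i -> ile x (F i) -> ile x (\sum_(j < N | P j) F j).
Proof. exact: ile_sumr (mem_index_enum i). Qed.

Lemma psumr_eq0P (I : eqType) (r : seq I) (P : pred I) (F : I -> R) i :
  \sum_(j <- r | P j) F j = 0 -> i \in r -> P i -> F i = 0.
Proof.
move=> F0 ri Pi; have: ile (F i) 0 by rewrite -F0; apply: ile_sumr ri Pi (ile_refl _).
by rewrite /ile addr0.
Qed.

Lemma mulrn_idem x m : (0 < m)%N -> x *+ m = x.
Proof. by case: m => // m _; elim: m => // m IH; rewrite mulrS IH idR. Qed.

Lemma exprD_idem x y k : (x + y) ^+ k = \sum_(i < k.+1) x ^+ (k - i) * y ^+ i.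
Proof.
by rewrite exprDn; apply: eq_bigr => i _; rewrite mulrn_idem // bin_gt0 -ltnS.
Qed.

Lemma sum_exprD N x y :
  \sum_(k < N) (x + y) ^+ k =
  \sum_(i < N) \sum_(j < N | (i + j < N)%N) x ^+ i * y ^+ j.
Proof.
apply: ile_anti.
  apply: ile_sum => k _; rewrite exprD_idem; apply: ile_sum => i _.
  have lt_ki : (k - i < N)%N by apply: leq_ltn_trans (leq_subr _ _) (ltn_ord k).
  apply: (ile_sum_ord (i := Ordinal lt_ki)) => //=.
  have lt_iN : (i < N)%N by apply: leq_ltn_trans (ltn_ord k); rewrite -ltnS.
  apply: (ile_sum_ord (i := Ordinal lt_iN)) (ile_refl _) => /=.
  by rewrite subnK // -ltnS.
apply: ile_sum => i _; apply: ile_sum => j lt_ijN.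
apply: (ile_sum_ord (i := Ordinal lt_ijN)) => //=; rewrite exprD_idem.
have lt_j : (j < (i + j).+1)%N by rewrite ltnS leq_addl.
by apply: (ile_sum_ord (i := Ordinal lt_j)) => //=; rewrite addnK; apply: ile_refl.
Qed.

Lemma sum_expr_blocks m N x :
  (\sum_(j < m) x ^+ j) * \sum_(l < N) (x ^+ m) ^+ l = \sum_(k < m * N) x ^+ k.
Proof.
rewrite big_distrl /=; apply: ile_anti.
  apply: ile_sum => j _; rewrite mulr_sumr; apply: ile_sum => l _.
  have lt_jml : (j + m * l < m * N)%N.
    apply: (@leq_trans (m * l.+1)); first by rewrite mulnS ltn_add2r.
    by rewrite leq_mul2l ltn_ord orbT.
  apply: (ile_sum_ord (i := Ordinal lt_jml)) => //=.
  by rewrite -exprM -exprD; apply: ile_refl.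
apply: ile_sum => k _.
have m_gt0 : (0 < m)%N by case: m k => [[]|].
have lt_mod : (k %% m < m)%N by rewrite ltn_pmod.
apply: (ile_sum_ord (i := Ordinal lt_mod)) => //=; rewrite mulr_sumr.
have lt_div : (k %/ m < N)%N by rewrite ltn_divLR // [(N * m)%N]mulnC.
apply: (ile_sum_ord (i := Ordinal lt_div)) => //=.
by rewrite -exprM -exprD addnC [(m * (k %/ m))%N]mulnC -divn_eq; apply: ile_refl.
Qed.

End IdempotentSemiring.

Section IdempotentSeries.
Variable K : comPzSemiRingType.
Hypothesis idK : idempotent_sr K.
Implicit Types (U V M B : series K).

Lemma series_idem : idempotent_sr (series K).
Proof. by move=> S; apply/funext => n; rewrite coefD idK. Qed.

Lemma sstarD U V : U 0%N = 0 -> V 0%N = 0 ->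
  sstar (U + V) = sstar U * sstar V.
Proof.
move=> U0 V0; apply: agree_lt_eq => N.
have UV0 : (U + V) 0%N = 0 by rewrite coefD U0 V0 addr0.
apply: agree_lt_trans (agree_lt_sstar (N := N) UV0) _.
apply: agree_lt_sym.
apply: agree_lt_trans
  (agree_ltM (agree_lt_sstar (N := N) U0) (agree_lt_sstar (N := N) V0)) _.
rewrite sum_exprD; last exact: series_idem.
have -> : (\sum_(i < N) U ^+ i) * \sum_(j < N) V ^+ j =
    \sum_(i < N) \sum_(j < N | (i + j < N)%N) U ^+ i * V ^+ j +
    \sum_(i < N) \sum_(j < N | ~~ (i + j < N)%N) U ^+ i * V ^+ j.
  rewrite big_distrl -big_split; apply: eq_bigr => i _ /=.
  by rewrite big_distrr (bigID (fun j : 'I_N => (i + j < N)%N)).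
apply: agree_lt_addr; apply: vanish_lt_sum => i _; apply: vanish_lt_sum => j.
by rewrite -leqNgt => /vanish_ltW; apply; apply: vanish_ltM; apply: vanish_ltX.
Qed.

Lemma sstarXn U k : U 0%N = 0 -> sstar U ^+ k.+1 = sstar U.
Proof.
move=> U0; elim: k => [|k IH]; first exact: expr1.
by rewrite exprS IH -sstarD // series_idem.
Qed.

(* [(M B^* )^k = M^k B^*] for [k > 0] since [B^*] is multiplicatively idempotent. *)
Lemma sstar_mul_sstar M B : M 0%N = 0 -> B 0%N = 0 ->
  sstar (M * sstar B) = 1 + M * sstar M * sstar B.
Proof.
move=> M0 B0; apply: agree_lt_eq => N.
have MB0 : (M * sstar B) 0%N = 0 by rewrite coefM0 M0 mul0r.
apply: agree_lt_trans (agree_ltW (leqnSn N) (agree_lt_sstar (N := N.+1) MB0)) _.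
rewrite big_ord_recl expr0.
have -> : \sum_(i < N) (M * sstar B) ^+ (lift ord0 i) =
    M * (\sum_(i < N) M ^+ i) * sstar B.
  rewrite mulr_sumr mulr_suml; apply: eq_bigr => i _.
  by rewrite lift0 exprMn sstarXn // exprS.
apply: agree_ltD => //; apply: agree_ltM => //; apply: agree_ltM => //.
exact/agree_lt_sym/agree_lt_sstar.
Qed.

Lemma sstar_blocks U m : U 0%N = 0 -> (0 < m)%N ->
  sstar U = (\sum_(j < m) U ^+ j) * sstar (U ^+ m).
Proof.
move=> U0 m_gt0; have Um0 : (U ^+ m) 0%N = 0 by apply: (vanish_ltX (k := m) U0).
apply: agree_lt_eq => N.
have U_mN := agree_lt_sstar (N := m * N) U0.
apply: agree_lt_trans (agree_ltW (leq_pmull N m_gt0) U_mN) _.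
rewrite -sum_expr_blocks; last exact: series_idem.
by apply: agree_ltM => //; apply/agree_lt_sym/agree_lt_sstar.
Qed.

Lemma sstar_sum (I : eqType) (r : seq I) (F : I -> series K) :
  (forall i, i \in r -> F i 0%N = 0) ->
  sstar (\sum_(i <- r) F i) = \prod_(i <- r) sstar (F i).
Proof.
elim: r => [|i r IH] F0; first by rewrite !big_nil sstar0.
have rF0 j : j \in r -> F j 0%N = 0 by move=> rj; apply: F0; rewrite inE rj orbT.
rewrite !big_cons sstarD ?IH ?F0 ?mem_head //.
by rewrite coef_sum big_seq big1 // => j /rF0.
Qed.

End IdempotentSeries.

Section NormalForm.
Variable K : comPzSemiRingType.
Hypothesis idK : idempotent_sr K.
Implicit Types (S T U : series K) (a q : K).

Definition nf_term c (t : K * nat * K) : series K :=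
  smono t.1.1 t.1.2 * sstar (smono t.2 c).

Definition normal_form c S :=
  exists l : seq (K * nat * K), S = \sum_(t <- l) nf_term c t.

Definition normalizable S := exists2 c, (0 < c)%N & normal_form c S.

Lemma normal_form_term c t : normal_form c (nf_term c t).
Proof. by exists [:: t]; rewrite big_seq1. Qed.

Lemma normal_formD c S T :
  normal_form c S -> normal_form c T -> normal_form c (S + T).
Proof. by move=> [l1 ->] [l2 ->]; exists (l1 ++ l2); rewrite big_cat. Qed.

Lemma normal_form_sum c (I : Type) (r : seq I) (F : I -> series K) :
  (forall i, normal_form c (F i)) -> normal_form c (\sum_(i <- r) F i).
Proof.
move=> hF; elim: r => [|i r IH]; first by exists [::]; rewrite !big_nil.
by rewrite big_cons; apply: normal_formD.
Qed.

Lemma normal_form_smono c a e : normal_form c (smono a e).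
Proof.
have <- : nf_term c (a, e, 0) = smono a e by rewrite /nf_term smono0 sstar0 mulr1.
exact: normal_form_term.
Qed.

Lemma normal_form_sstar_smono c q : normal_form c (sstar (smono q c)).
Proof.
have <- : nf_term c (1, 0%N, q) = sstar (smono q c) by rewrite /nf_term smono10 mul1r.
exact: normal_form_term.
Qed.

Lemma nf_termM c t t' : (0 < c)%N ->
  nf_term c t * nf_term c t' = nf_term c (t.1.1 * t'.1.1, (t.1.2 + t'.1.2)%N, t.2 + t'.2).
Proof.
move=> c_gt0; rewrite /nf_term /= mulrACA smonoM -sstarD ?smonoD //;
  exact: smono_coef0.
Qed.

Lemma normal_formM c S T : (0 < c)%N ->
  normal_form c S -> normal_form c T -> normal_form c (S * T).
Proof.
move=> c_gt0 [l ->] [l' ->]; rewrite big_distrl /=; apply: normal_form_sum => t.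
rewrite big_distrr /=; apply: normal_form_sum => t'.
by rewrite nf_termM //; apply: normal_form_term.
Qed.

Lemma normal_form_rescale c m S : (0 < c)%N -> (0 < m)%N ->
  normal_form c S -> normal_form (m * c) S.
Proof.
move=> c_gt0 m_gt0 [l ->]; apply: normal_form_sum => -[[a e] q].
rewrite /nf_term (sstar_blocks idK _ m_gt0) ?smono_coef0 //= smonoX.
rewrite mulr_suml mulr_sumr; apply: normal_form_sum => j.
rewrite smonoX mulrA smonoM.
exact: (normal_form_term _ (a * q ^+ j, (e + j * c)%N, q ^+ m)).
Qed.

Lemma normalizable_common S T : normalizable S -> normalizable T ->
  exists2 c, (0 < c)%N & normal_form c S /\ normal_form c T.
Proof.
move=> [c1 c1_gt0 hS] [c2 c2_gt0 hT].
exists (c2 * c1)%N; first by rewrite muln_gt0 c1_gt0 c2_gt0.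
by split; [|rewrite mulnC]; apply: normal_form_rescale.
Qed.

Lemma normalizableD S T : normalizable S -> normalizable T -> normalizable (S + T).
Proof.
move=> hS /(normalizable_common hS) [c c_gt0 [{}hS hT]].
by exists c; last exact: normal_formD.
Qed.

Lemma normalizableM S T : normalizable S -> normalizable T -> normalizable (S * T).
Proof.
move=> hS /(normalizable_common hS) [c c_gt0 [{}hS hT]].
by exists c; last exact: normal_formM.
Qed.

Lemma normalizable_smono a e : normalizable (smono a e).
Proof. by exists 1%N; last exact: normal_form_smono. Qed.

Lemma normalizable1 : normalizable 1.
Proof. by rewrite -smono10; apply: normalizable_smono. Qed.

Lemma normalizable_prod (I : eqType) (r : seq I) (F : I -> series K) :
  (forall i, i \in r -> normalizable (F i)) -> normalizable (\prod_(i <- r) F i).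
Proof.
elim: r => [|i r IH] hF; first by rewrite big_nil; apply: normalizable1.
rewrite big_cons; apply: normalizableM; first by apply: hF; rewrite mem_head.
by apply: IH => j rj; apply: hF; rewrite inE rj orbT.
Qed.

Lemma normalizable_poly S : is_poly S -> normalizable S.
Proof.
move=> [N hN]; have -> : S = \sum_(e < N) smono (S e) e.
  apply/funext => n; rewrite coef_sum; case: (ltnP n N) => [lt_nN|le_Nn].
    rewrite (bigD1 (Ordinal lt_nN)) //= /smono eqxx big1 ?addr0 // => e ne_en.
    by rewrite ifN // eq_sym; apply: contra ne_en => /eqP en; apply/eqP/val_inj.
  rewrite hN // big1 // => e _.
  by rewrite /smono ifN // neq_ltn (leq_trans (ltn_ord e) le_Nn) orbT.
exists 1%N => //; apply: normal_form_sum => e; exact: normal_form_smono.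
Qed.

Lemma normalizable_sstar_smono a e :
  smono a e 0%N = 0 -> normalizable (sstar (smono a e)).
Proof.
case: e => [a0|e _]; last by exists e.+1; last exact: normal_form_sstar_smono.
by rewrite [a]a0 smono0 sstar0; apply: normalizable1.
Qed.

Lemma normalizable_sstar_term c t : (0 < c)%N -> nf_term c t 0%N = 0 ->
  normalizable (sstar (nf_term c t)).
Proof.
case: t => -[a e] q c_gt0; rewrite /nf_term coefM0 sstar_coef0 mulr1 /= => ae0.
rewrite sstar_mul_sstar //; last exact: smono_coef0.
apply: normalizableD normalizable1 _; apply: normalizableM.
  exact: normalizableM (normalizable_smono a e) (normalizable_sstar_smono ae0).
by exists c; last exact: normal_form_sstar_smono.
Qed.

Lemma normalizable_sstar S : normalizable S -> S 0%N = 0 -> normalizable (sstar S).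
Proof.
move=> [c c_gt0 [l ->]]; rewrite coef_sum => S0.
have l0 t : t \in l -> nf_term c t 0%N = 0 by move=> lt; apply: psumr_eq0P S0 lt _.
rewrite sstar_sum //; apply: normalizable_prod => t /l0.
exact: normalizable_sstar_term.
Qed.

Lemma rational_normalizable S : rational S -> normalizable S.
Proof.
elim=> {S} [S /normalizable_poly //|S T _ hS _ hT|S T _ hS _ hT|U _ hU U0].
- exact: normalizableD.
- exact: normalizableM.
- exact: normalizable_sstar.
Qed.

End NormalForm.

Theorem lemma1 (K : comPzSemiRingType) (hid : idempotent_sr K)
  (S : series K) (hS : rational S) :
  exists (r : nat) (P : nat -> series K) (q : nat -> K) (c : nat),
    (0 < c)%N /\
    (forall i, (i < r)%N -> is_poly (P i)) /\
    S = sbig r (fun i => smul (P i) (sstar (smono (q i) c))).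
Proof.
have [c c_gt0 [l ->]] := rational_normalizable hid hS.
pose t i := nth (0, 0%N, 0) l i.
exists (size l), (fun i => smono (t i).1.1 (t i).1.2), (fun i => (t i).2), c.
split=> //; split.
  move=> i _; exists (t i).1.2.+1 => n lt_n.
  by rewrite /smono ifN // neq_ltn lt_n orbT.
apply/funext => n; rewrite coef_sum (big_nth (0, 0%N, 0)) big_mkord.
by apply: eq_bigr.
Qed.
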